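(* Let $\Box$ be an axis-parallel square of side length $1/2$, $l$ the line containing its top edge, $H$ the open halfplane above $l$, and $u_1,\dots,u_N$ points in $\Box$. Define subdivisions $\varPhi_0,\dots,\varPhi_N$ of $H$: $\varPhi_0$ has the single face $F_0=H$ (its outer face); given $\varPhi_{i-1}$ with outer face $F_{i-1}=H\setminus\bigcup_{j<i}\odot_{u_j}$, obtain $\varPhi_i$ by splitting $F_{i-1}$ into the face $F_i=F_{i-1}\setminus\odot_{u_i}$ (the new outer face) and the connected components of $F_{i-1}\cap\odot_{u_i}$, each of which is labeled $i$; all other faces are kept. Let $\varPhi=\varPhi_N$. Then $\varPhi$ has complexity $O(N)$, and for each $i\in\{1,\dots,N\}$, $\varPhi$ has at most one face labeled $i$.
   Context: $\odot_a$ denotes the closed disk of radius 1 centered at $a$ (Euclidean norm). *)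

(* The plane is R * R with the product topology
   (= Euclidean topology); disks use the Euclidean norm explicitly. *)
From HB Require Import structures.
From mathcomp Require Import all_boot all_order all_algebra.
From mathcomp Require Import all_classical all_reals all_analysis.
Set Implicit Arguments. Unset Strict Implicit. Unset Printing Implicit Defensive.
Import Order.TTheory GRing.Theory Num.Theory.
Import numFieldNormedType.Exports.
Local Open Scope classical_set_scope.
Local Open Scope ring_scope.

Section Defs.
Variable R : realType.
Notation P := (R * R)%type.

Definition disk (a : P) : set P :=
  [set p | (p.1 - a.1) ^+ 2 + (p.2 - a.2) ^+ 2 <= 1].

Definition box (a b : R) : set P :=
  [set p | a <= p.1 <= a + 2^-1 /\ b <= p.2 <= b + 2^-1].

Definition halfH (b : R) : set P := [set p | b + 2^-1 < p.2].

Definition outer_face (b : R) (u : nat -> P) (i : nat) : set P :=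
  halfH b `\` \bigcup_(j in [set j : nat | (1 <= j <= i)%N]) disk (u j).

Definition labeled_face (b : R) (u : nat -> P) (i : nat) (C : set P) : Prop :=
  exists x, (outer_face b u i.-1 `&` disk (u i)) x /\
            C = connected_component (outer_face b u i.-1 `&` disk (u i)) x.

Definition faces (b : R) (u : nat -> P) (N : nat) : set (set P) :=
  [set C | C = outer_face b u N \/
           exists i, (1 <= i <= N)%N /\ labeled_face b u i C].

Definition regions (b : R) (u : nat -> P) (N : nat) : set (set P) :=
  faces b u N `|` [set ~` halfH b].

Definition bd (A : set P) : set P := closure A `\` interior A.

Definition skeleton (b : R) (u : nat -> P) (N : nat) : set P :=
  \bigcup_(A in regions b u N) bd A.

Definition vertices (b : R) (u : nat -> P) (N : nat) : set P :=
  [set p | exists A1 A2 A3, [/\ regions b u N A1, regions b u N A2 &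
      regions b u N A3] /\ [/\ A1 <> A2, A1 <> A3 & A2 <> A3] /\
      [/\ bd A1 p, bd A2 p & bd A3 p]].

Definition edges (b : R) (u : nat -> P) (N : nat) : set (set P) :=
  [set E | exists x, (skeleton b u N `\` vertices b u N) x /\
     E = connected_component (skeleton b u N `\` vertices b u N) x].

End Defs.

Definition atmost (T : Type) (A : set T) (n : nat) : Prop :=
  exists f : nat -> T, A `<=` f @` [set k : nat | (k < n)%N].

Definition complexity_le (R : realType) (b : R) (u : nat -> R * R) (N n : nat) : Prop :=
  exists nf nv ne : nat, (nf + nv + ne <= n)%N /\
    atmost (faces b u N) nf /\ atmost (vertices b u N) nv /\
    atmost (edges b u N) ne.

From HB Require Import structures.
From mathcomp Require Import all_boot all_order all_algebra.
From mathcomp Require Import all_classical all_reals all_analysis.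
From mathcomp Require Import ring lra.
From Stdlib Require Import Lia.
From mathcomp Require Import zify.
Set Implicit Arguments. Unset Strict Implicit. Unset Printing Implicit Defensive.
Import Order.TTheory GRing.Theory Num.Theory.
Import numFieldNormedType.Exports.
Local Open Scope classical_set_scope.
Local Open Scope ring_scope.

(* Above the line l, a point lies outside the disk of u_j iff it lies above the
   upper semicircle of that disk, so F_k is the part of H above the upper envelope
   e_k of l and the first k semicircles, and F_(i-1) ∩ ⊙u_i is the band
   e_(i-1) < y <= e_i. This band is connected because the abscissae where
   e_(i-1) < e_i form an interval: two unit circles meet in two points symmetric
   about the midpoint of their centres, and as all centres lie in a square of side
   1/2 below l, at most one of these points is above l. Hence at most one face is
   labeled i. For the complexity, the skeleton is the union of the arcs of the
   envelopes; every vertex is an endpoint of one of the N intervals, and every edge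
   is determined by its arc and the nearest vertex of that arc to its left. *)

Lemma atmost_functional (T : Type) (x0 : T) (A : set T) n (P : nat -> T -> Prop) :
  (forall k x y, P k x -> P k y -> x = y) ->
  (forall x, A x -> exists2 k, (k < n)%N & P k x) -> atmost A n.
Proof.
move=> Pfun AP.
exists (fun k => if pselect (exists x, P k x) is left h then projT1 (cid h) else x0).
move=> x /AP [k kn Pkx]; exists k => //.
case: pselect => [h|[]]; last by exists x.
exact: Pfun (projT2 (cid h)) Pkx.
Qed.

Lemma three_distinct_between (P : nat -> Prop) k1 k2 k3 :
  P k1 -> P k2 -> P k3 -> k1 <> k2 -> k1 <> k3 -> k2 <> k3 ->
  exists lo m hi, [/\ (lo < m < hi)%N, P lo, P m & P hi].
Proof.
move=> p1 p2 p3 n12 n13 n23.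
have [a|a] : (k1 < k2 \/ k2 < k1)%N by lia.
all: have [b|b] : (k2 < k3 \/ k3 < k2)%N by lia.
all: have [c|c] : (k1 < k3 \/ k3 < k1)%N by lia.
all: first [ by exists k1, k2, k3; rewrite a | by exists k1, k3, k2; rewrite c
  | by exists k2, k1, k3; rewrite a | by exists k2, k3, k1; rewrite b
  | by exists k3, k1, k2; rewrite c | by exists k3, k2, k1; rewrite b
  | (exfalso; lia) ].
Qed.

Lemma bounded_argmax (R : realDomainType) n (P : nat -> Prop) (v : nat -> R) :
  (exists2 m, (m < n)%N & P m) ->
  exists m, [/\ (m < n)%N, P m & forall m', (m' < n)%N -> P m' -> v m' <= v m].
Proof.
move=> [m0 m0n Pm0].
have [[i ilt] /asboolP Pi imax] :=
  @arg_maxP _ _ _ (Ordinal m0n) (fun i : 'I_n => `[< P i >]) (fun i => v i) (asboolT Pm0).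
exists i; split=> // m' m'n Pm'.
exact: (imax (Ordinal m'n) (asboolT Pm')).
Qed.

Lemma continuous_graph (T U : topologicalType) (f : T -> U) :
  continuous f -> continuous (fun x => (x, f x)).
Proof. by move=> fc x; apply: cvg_pair; [exact: cvg_id | exact: fc]. Qed.

Lemma pair_continuous (T U : topologicalType) (x : T) :
  continuous (fun y : U => (x, y)).
Proof. by move=> y; apply: cvg_pair; [exact: cvg_cst | exact: cvg_id]. Qed.

Lemma continuous_closure (T U : topologicalType) (f : T -> U) (A : set T) (B : set U) p :
  continuous f -> A `<=` f @^-1` B -> closure A p -> closure B (f p).
Proof.
move=> fc AB cA V /fc /cA [q [Aq Vfq]].
by exists (f q); split => //; apply: AB.
Qed.

Section OrderTopology.
Variable R : realType.

Lemma open_ltr_fun (T : topologicalType) (f g : T -> R) :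
  continuous f -> continuous g -> open [set p | f p < g p].
Proof.
move=> fc gc.
have -> : [set p | f p < g p] = (fun p => g p - f p) @^-1` [set t | 0 < t].
  by apply/seteqP; split => p /=; rewrite subr_gt0.
apply: open_comp; last exact: open_gt.
by move=> p _; apply: cvgB; [exact: gc | exact: fc].
Qed.

Lemma closure_ler_fun (T : topologicalType) (f g : T -> R) (A : set T) :
  continuous f -> continuous g -> A `<=` [set p | f p <= g p] ->
  closure A `<=` [set p | f p <= g p].
Proof.
move=> fc gc Afg; have -> : [set p | f p <= g p] = ~` [set p | g p < f p].
  by apply/seteqP; split => p /=; rewrite leNgt => /negP.
rewrite ((closure_id _).1 (open_closedC (open_ltr_fun gc fc))); apply: closureS.
by move=> p /Afg /=; rewrite leNgt => /negP.
Qed.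

Lemma closure_lbound (X : set R) c q : closure X q -> (forall y, X y -> c <= y) -> c <= q.
Proof.
by move=> Xq Xc; apply: (@closed_ge _ c q); apply: closureS Xq.
Qed.

Lemma closure_ubound (X : set R) c q : closure X q -> (forall y, X y -> y <= c) -> q <= c.
Proof.
by move=> Xq Xc; apply: (@closed_le _ c q); apply: closureS Xq.
Qed.

Definition lower_end (X : set R) q := closure X q /\ forall y, X y -> q < y.

Definition upper_end (X : set R) q := closure X q /\ forall y, X y -> y < q.

Lemma lower_end_uniq (X : set R) q q' : lower_end X q -> lower_end X q' -> q = q'.
Proof.
move=> [Xq qX] [Xq' q'X]; apply/eqP; rewrite eq_le.
by rewrite (closure_lbound Xq' (fun y Xy => ltW (qX y Xy)))
  (closure_lbound Xq (fun y Xy => ltW (q'X y Xy))).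
Qed.

Lemma upper_end_uniq (X : set R) q q' : upper_end X q -> upper_end X q' -> q = q'.
Proof.
move=> [Xq qX] [Xq' q'X]; apply/eqP; rewrite eq_le.
by rewrite (closure_ubound Xq (fun y Xy => ltW (q'X y Xy)))
  (closure_ubound Xq' (fun y Xy => ltW (qX y Xy))).
Qed.

Lemma interval_end (X : set R) q : is_interval X -> closure X q -> ~ X q ->
  lower_end X q \/ upper_end X q.
Proof.
move=> iX Xq nXq.
have [lo|] := pselect (forall y, X y -> q < y); first by left.
move=> /existsNP[y1 /not_implyP[Xy1 /negP]]; rewrite -leNgt => y1q.
right; split=> // y2 Xy2; rewrite ltNge; apply/negP => qy2.
by apply: nXq; apply: (iX y1 y2) => //; rewrite y1q.
Qed.

Lemma bd_sub_closureD (A O : set (R * R)) :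
  open O -> O `<=` A -> bd A `<=` closure A `\` O.
Proof.
move=> oO OA p [Ap nAp]; split=> // Op; apply: nAp.
by move: OA; rewrite open_subsetE //; apply.
Qed.

Lemma not_interior_above (A : set (R * R)) x y :
  (forall t, 0 < t -> ~ A (x, y + t)) -> ~ interior A (x, y).
Proof.
move=> nA /(@pair_continuous _ _ x y) /nbhs_ballP [e /= e0 sub].
apply: (nA (e / 2)); first lra.
apply: (sub (y + e / 2)); rewrite -ball_normE /ball_ /= opprD addrA subrr sub0r normrN.
by rewrite ger0_norm; lra.
Qed.

End OrderTopology.

Lemma continuous_sign_change (R : realType) (f : R -> R) a c :
  continuous f -> a <= c -> f a * f c <= 0 -> exists2 r, a <= r <= c & f r = 0.
Proof.
move=> fc ac fac.
have [|r] := IVT ac (continuous_subspaceT fc) (v := 0).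
  apply/andP; split; rewrite ?ge_min ?le_max; apply/orP.
  - by have [?|?] := leP (f a) 0; [left | right; nra].
  - by have [?|?] := leP 0 (f a); [left | right; nra].
by rewrite in_itv => ? ?; exists r.
Qed.

(** * Circle geometry *)

Lemma unit_circles_meet (R : realFieldType) (w1 w2 r1 t1 r2 t2 : R) :
  r1 != r2 -> w2 != 0 ->
  r1 * r1 + t1 * t1 = 1 -> r2 * r2 + t2 * t2 = 1 ->
  2 * (r1 * w1 + t1 * w2) = w1 * w1 + w2 * w2 ->
  2 * (r2 * w1 + t2 * w2) = w1 * w1 + w2 * w2 ->
  t1 + t2 = w2.
Proof.
move=> r12 w20 c1 c2 e1 e2.
set d := r1 - r2; set e := t1 - t2.
have dw : d * w1 = - (e * w2) by rewrite /d /e; nra.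
have dS : d * (r1 + r2) = - (e * (t1 + t2)) by rewrite /d /e; nra.
have sum : (r1 + r2) * w1 + (t1 + t2) * w2 = w1 * w1 + w2 * w2 by nra.
have key : w2 * (e * e + d * d) * ((t1 + t2) - w2) = 0.
  have E1 : (d * (r1 + r2)) * (d * w1) + (t1 + t2) * w2 * (d * d)
      = (d * d) * (w1 * w1 + w2 * w2) by rewrite -sum; ring.
  rewrite dS dw in E1.
  have E3 : (d * d) * (w1 * w1) = (e * e) * (w2 * w2).
    by transitivity ((d * w1) * (d * w1)); [ring | rewrite dw; ring].
  nra.
have dd : 0 < d * d by rewrite -expr2 exprn_even_gt0 //= subr_eq0.
have pos : 0 < e * e + d * d by nra.
by apply/eqP; rewrite -subr_eq0; move/eqP: key; rewrite !mulf_eq0 (negPf w20) (gt_eqF pos).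
Qed.

Section Semicircle.
Variable R : realType.
Implicit Types (s h : R).

Definition semicircle s : R := Num.sqrt (1 - s * s).

Lemma semicircle_ge0 s : 0 <= semicircle s.
Proof. exact: sqrtr_ge0. Qed.

Lemma semicircle_sqr s : s * s <= 1 -> semicircle s * semicircle s = 1 - s * s.
Proof. by move=> s1; rewrite -expr2 sqr_sqrtr // subr_ge0. Qed.

Lemma lt_semicircle h s : 0 <= h -> (h < semicircle s <-> h * h < 1 - s * s).
Proof.
move=> h0; have g := semicircle_ge0 s.
have [s1|s1] := leP (s * s) 1.
  by have e := semicircle_sqr s1; split=> ?; nra.
by rewrite /semicircle ltr0_sqrtr ?subr_lt0 //; split=> ?; nra.
Qed.

Lemma semicircle_lt h s : 0 < h -> (semicircle s < h <-> 1 - s * s < h * h).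
Proof.
move=> h0; have g := semicircle_ge0 s.
have [s1|s1] := leP (s * s) 1.
  by have e := semicircle_sqr s1; split=> ?; nra.
by rewrite /semicircle ltr0_sqrtr ?subr_lt0 //; split=> ?; nra.
Qed.

Lemma lt_semicircle_between h s1 s2 s3 : 0 <= h -> s1 <= s2 <= s3 ->
  h < semicircle s1 -> h < semicircle s3 -> h < semicircle s2.
Proof.
move=> h0 /andP[s12 s23]; rewrite !lt_semicircle // => t1 t3.
by have [?|?] := leP 0 s2; nra.
Qed.

Lemma semicircle_continuous : continuous semicircle.
Proof.
move=> x; apply: (@continuous_comp _ _ _ (fun s : R => 1 - s * s) Num.sqrt).
  by apply: cvgB; [exact: cvg_cst | apply: cvgM; exact: cvg_id].
exact: sqrt_continuous.
Qed.

Lemma semicircle_concave s1 s2 s3 : s1 < s2 < s3 -> s1 * s1 <= 1 -> s3 * s3 <= 1 ->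
  semicircle s1 * (s3 - s2) + semicircle s3 * (s2 - s1) <= semicircle s2 * (s3 - s1).
Proof.
move=> /andP[s12 s23] q1 q3.
have q2 : s2 * s2 <= 1 by have [?|?] := leP 0 s2; nra.
have e1 := semicircle_sqr q1; have e2 := semicircle_sqr q2; have e3 := semicircle_sqr q3.
have g1 := semicircle_ge0 s1; have g2 := semicircle_ge0 s2.
have g3 := semicircle_ge0 s3.
have h13 : semicircle s1 * semicircle s3 <= 1 - s1 * s3.
  suff : (semicircle s1 * semicircle s3) ^+ 2 <= (1 - s1 * s3) ^+ 2.
    by rewrite ler_pXn2r ?nnegrE //; nra.
  by rewrite exprMn !expr2 e1 e3; nra.
set L := semicircle s2 * (s3 - s1).
set M := semicircle s1 * (s3 - s2) + semicircle s3 * (s2 - s1).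
have L0 : 0 <= L by rewrite /L; nra.
suff : M * M <= L * L by nra.
have -> : L * L = (semicircle s2 * semicircle s2) * ((s3 - s1) * (s3 - s1)) by rewrite /L; ring.
have -> : M * M = (semicircle s1 * semicircle s1) * ((s3 - s2) * (s3 - s2))
    + (semicircle s3 * semicircle s3) * ((s2 - s1) * (s2 - s1))
    + 2 * (semicircle s1 * semicircle s3) * ((s3 - s2) * (s2 - s1)) by rewrite /M; ring.
rewrite e1 e2 e3.
have p : 0 <= (s3 - s2) * (s2 - s1) by nra.
nra.
Qed.

End Semicircle.

Section Coverage.
Variable R : realType.
Variables w1 w2 : R.
Implicit Types (s h : R).

(* For [s * s <= 1], [1 - coverage s] is the squared distance from [(w1, w2)]
   to the point [(s, semicircle s)] of the unit circle. *)
Definition coverage s : R := 2 * (s * w1 + semicircle s * w2) - (w1 * w1 + w2 * w2).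

Lemma coverage_continuous : continuous coverage.
Proof.
move=> x; apply: cvgB; last exact: cvg_cst.
apply: cvgM; first exact: cvg_cst.
apply: cvgD; apply: cvgM; try exact: cvg_cst; first exact: cvg_id.
exact: semicircle_continuous.
Qed.

Lemma coverage_gt0_between s1 s2 s3 : 0 <= w2 -> s1 < s2 < s3 ->
  s1 * s1 <= 1 -> s3 * s3 <= 1 -> 0 <= coverage s1 -> 0 <= coverage s3 ->
  0 < coverage s1 + coverage s3 -> 0 < coverage s2.
Proof.
move=> w20 s123 q1 q3 c1 c3 c13; have := semicircle_concave s123 q1 q3.
case/andP: s123 => s12 s23 conc.
have : coverage s1 * (s3 - s2) + coverage s3 * (s2 - s1) <= coverage s2 * (s3 - s1).
  by rewrite /coverage; nra.
have : 0 < coverage s1 * (s3 - s2) + coverage s3 * (s2 - s1).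
  have [?|?] := ltP 0 (coverage s1); first by nra.
  have ? : 0 < coverage s3 by lra.
  nra.
nra.
Qed.

Lemma coverage_gt0_direction : 0 < w2 -> w1 * w1 + w2 * w2 < 4 ->
  exists2 s, s * s <= 1 & 0 < coverage s.
Proof.
move=> w20 w4.
have [n n0 nn] : exists2 n, 0 < n & n * n = w1 * w1 + w2 * w2.
  by exists (Num.sqrt (w1 * w1 + w2 * w2)); rewrite ?sqrtr_gt0 -?expr2 ?sqr_sqrtr //; nra.
have nz : n != 0 by rewrite gt_eqF.
have e : 1 - w1 / n * (w1 / n) = (w2 / n) ^+ 2.
  apply: (mulIf (mulf_neq0 nz nz)) => /=; transitivity (n * n - w1 * w1); first by field.
  by rewrite [in LHS]nn; field.
exists (w1 / n); first by rewrite -subr_ge0 e sqr_ge0.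
have -> : coverage (w1 / n) = n * (2 - n).
  rewrite /coverage /semicircle e sqrtr_sqr ger0_norm ?divr_ge0 ?ltW //.
  transitivity (2 * ((w1 * w1 + w2 * w2) / n) - (w1 * w1 + w2 * w2)); first by field.
  by rewrite -nn; field.
apply: mulr_gt0 => //; nra.
Qed.

Lemma coverage_lt0_between_low s1 s2 s3 : w2 <= 0 -> s1 < s2 < s3 ->
  s1 * s1 <= 1 -> s3 * s3 <= 1 ->
  coverage s1 < 0 -> coverage s3 < 0 -> coverage s2 < 0.
Proof.
move=> w2n /andP[s12 s23] q1 q3; rewrite /coverage => c1 c3.
have q2 : s2 * s2 <= 1 by have [?|?] := leP 0 s2; nra.
have e1 := semicircle_sqr q1; have e2 := semicircle_sqr q2; have e3 := semicircle_sqr q3.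
have g1 := semicircle_ge0 s1; have g2 := semicircle_ge0 s2.
have g3 := semicircle_ge0 s3.
rewrite ltNge; apply/negP => c2.
have [w1p|w1n] := ltP 0 w1.
  have s2p : 0 <= s2 by have [|] := leP 0 s2; nra.
  by have : semicircle s3 <= semicircle s2; nra.
have [w1n'|w10] := ltP w1 0.
  have s2n : s2 <= 0 by have [|] := leP s2 0; nra.
  by have : semicircle s1 <= semicircle s2; nra.
have {w1n w10} w10 : w1 = 0 by apply/eqP; rewrite eq_le w1n w10.
rewrite w10 in c1 c2.
have w20 : w2 = 0 by have : semicircle s2 * w2 <= 0; nra.
by rewrite w20 in c1; lra.
Qed.

Lemma coverage_gt0_inside s1 s2 s3 : 0 < w2 -> w1 * w1 + w2 * w2 < 4 ->
  s1 < s2 < s3 -> s2 * s2 <= 1 -> coverage s1 < 0 -> coverage s3 < 0 -> 0 <= coverage s2 ->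
  exists2 s, s1 < s < s3 & 0 < coverage s.
Proof.
move=> w2p w4 /andP[s12 s23] q2 c1 c3 c2.
have [s q c] := coverage_gt0_direction w2p w4.
exists s => //; apply/andP; split.
  rewrite ltNge le_eqVlt; apply/negP => /orP[/eqP E | lt]; first by move: c1; rewrite -E; lra.
  have := coverage_gt0_between (ltW w2p) (introT andP (conj lt s12)) q q2.
  by move=> /(_ (ltW c) c2); lra.
rewrite ltNge le_eqVlt; apply/negP => /orP[/eqP E | lt]; first by move: c3; rewrite E; lra.
have := coverage_gt0_between (ltW w2p) (introT andP (conj s23 lt)) q2 q.
by move=> /(_ c2 (ltW c)); lra.
Qed.

(* Otherwise the covered part of the arc between [s1] and [s3] would have two
   endpoints above height [h], whose heights sum to [w2 <= h] by [unit_circles_meet]. *)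
Lemma coverage_lt0_between h s1 s2 s3 : 0 <= h -> w2 <= h ->
  w1 * w1 + w2 * w2 < 4 -> s1 < s2 < s3 -> h < semicircle s1 -> h < semicircle s3 ->
  coverage s1 < 0 -> coverage s3 < 0 -> coverage s2 < 0.
Proof.
move=> h0 w2h w4 s123 t1 t3 c1 c3.
have dom s : h < semicircle s -> s * s <= 1 by move/(lt_semicircle _ h0); nra.
have [w2n|w2p] := leP w2 0; first exact: coverage_lt0_between_low (dom _ t1) (dom _ t3) c1 c3.
have above s : s1 <= s <= s3 -> h < semicircle s.
  by move=> s13; exact: lt_semicircle_between h0 s13 t1 t3.
have [s12 s23] := andP s123.
rewrite ltNge; apply/negP => c2.
have q2 := dom _ (above s2 ltac:(by rewrite !ltW)).
have [sg /andP[s1sg sgs3] csg] := coverage_gt0_inside w2p w4 s123 q2 c1 c3 c2.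
have [r1 /andP[r1a r1b] f1] :=
  continuous_sign_change coverage_continuous (ltW s1sg) ltac:(nra).
have [r2 /andP[r2a r2b] f2] :=
  continuous_sign_change coverage_continuous (ltW sgs3) ltac:(nra).
have r12 : r1 != r2.
  rewrite neq_lt (lt_le_trans _ r2a) // lt_neqAle r1b andbT.
  by apply/eqP => E; move: csg; rewrite -E f1 ltxx.
have T1 := above r1 ltac:(by rewrite r1a (le_trans r1b) ?ltW).
have T2 := above r2 ltac:(by rewrite r2b (le_trans _ r2a) ?ltW).
have circ (r : R) : r * r <= 1 -> r * r + semicircle r * semicircle r = 1.
  by move=> /semicircle_sqr ->; ring.
have root r : coverage r = 0 -> 2 * (r * w1 + semicircle r * w2) = w1 * w1 + w2 * w2.
  by move/eqP; rewrite subr_eq0 => /eqP.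
have := unit_circles_meet r12 (lt0r_neq0 w2p)
  (circ _ (dom _ T1)) (circ _ (dom _ T2)) (root _ f1) (root _ f2).
lra.
Qed.

End Coverage.

(** * The upper envelope of the disks *)

Section Envelope.
Variable R : realType.
Variables (a b : R) (N : nat) (u : nat -> R * R).
Hypothesis u_box : forall i, (1 <= i <= N)%N -> box a b (u i).

Definition ytop := b + 2^-1.

Definition upper j x := (u j).2 + semicircle (x - (u j).1).

Fixpoint envelope k x :=
  if k is k'.+1 then Num.max (envelope k' x) (upper k'.+1 x) else ytop.

Definition visible i := [set x | envelope i.-1 x < envelope i x].

Definition band i := [set p : R * R | envelope i.-1 p.1 < p.2 <= envelope i p.1].

Lemma ytop_le_envelope k x : ytop <= envelope k x.
Proof. by elim: k => [|k IH] //=; rewrite le_max IH. Qed.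

Lemma envelope_mono k k' x : (k <= k')%N -> envelope k x <= envelope k' x.
Proof.
elim: k' => [|k' IH]; first by rewrite leqn0 => /eqP->.
rewrite leq_eqVlt => /orP[/eqP->//|]; rewrite ltnS => /IH h.
by rewrite /= le_max h.
Qed.

Lemma envelope_lt k x y :
  envelope k x < y <-> ytop < y /\ forall j, (1 <= j <= k)%N -> upper j x < y.
Proof.
elim: k => [|k IH] /=; first by split=> [|[]//]; split=> // j; lia.
rewrite gt_max; split.
  move=> /andP[/IH[yt hk] hj]; split=> // j /andP[j1].
  by rewrite leq_eqVlt => /orP[/eqP->//|]; rewrite ltnS => jk; apply: hk; rewrite j1.
move=> [yt h]; apply/andP; split; last by apply: h; rewrite leqnn.
by apply/IH; split=> // j /andP[j1 jk]; apply: h; rewrite j1 (leq_trans jk).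
Qed.

Lemma center_le_ytop j : (1 <= j <= N)%N -> (u j).2 <= ytop.
Proof. by move=> /u_box [_ /andP[_ h]]. Qed.

Lemma notin_disk_above j (p : R * R) : (1 <= j <= N)%N -> ytop < p.2 ->
  ~ disk (u j) p <-> upper j p.1 < p.2.
Proof.
move=> jN yp; have yj := center_le_ytop jN.
have d0 : 0 < p.2 - (u j).2 by rewrite subr_gt0 (le_lt_trans yj yp).
rewrite /upper /disk /= -ltrBrDl semicircle_lt // !expr2.
by split=> h; [rewrite ltNge; apply/negP => ?; apply: h | move=> ?]; nra.
Qed.

Lemma outer_faceE k (p : R * R) : (k <= N)%N ->
  outer_face b u k p <-> envelope k p.1 < p.2.
Proof.
move=> kN; rewrite envelope_lt; have jN j : (1 <= j <= k)%N -> (1 <= j <= N)%N by lia.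
split=> [[yp ndisk] | [yp h]]; split=> //.
  by move=> j jk; apply/(notin_disk_above (jN _ jk) yp) => dj; apply: ndisk; exists j.
by move=> [j jk]; apply/(notin_disk_above (jN _ jk) yp)/h.
Qed.

Lemma labeled_regionE i : (1 <= i <= N)%N ->
  outer_face b u i.-1 `&` disk (u i) = band i.
Proof.
case: i => [//|i] iN; have iN' : (i <= N)%N by lia.
apply/seteqP; split=> p; rewrite /band /=.
  move=> [/(outer_faceE _ iN') h dk]; rewrite h le_max; apply/orP; right.
  have yp := le_lt_trans (ytop_le_envelope _ _) h.
  by rewrite leNgt; apply/negP => /(notin_disk_above iN yp).2.
move=> /andP[h1 h2]; split; first exact/outer_faceE.
have yp := le_lt_trans (ytop_le_envelope _ _) h1.
move: h2; rewrite le_max (leNgt p.2) h1 /= => h2.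
by apply: contrapT => /(notin_disk_above iN yp); rewrite ltNge h2.
Qed.

Lemma upper_lt_coverage i j x : (1 <= i <= N)%N -> (1 <= j <= N)%N ->
  ytop < upper i x ->
  upper j x < upper i x <->
  coverage ((u j).1 - (u i).1) ((u j).2 - (u i).2) (x - (u i).1) < 0.
Proof.
move=> iN jN; have yi := center_le_ytop iN; have yj := center_le_ytop jN.
rewrite /upper /coverage.
have -> : x - (u j).1 = (x - (u i).1) - ((u j).1 - (u i).1) by ring.
move: (x - (u i).1) ((u j).1 - (u i).1) => s w1.
set w2 := (u j).2 - (u i).2 => ys.
have ts : ytop - (u i).2 < semicircle s by rewrite ltrBlDl.
have s1 : s * s <= 1 by move: ts; rewrite lt_semicircle ?subr_ge0 //; nra.
have e := semicircle_sqr s1; have g := semicircle_ge0 s.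
have pos : 0 < semicircle s - w2 by rewrite /w2; lra.
have -> : ((u j).2 + semicircle (s - w1) < (u i).2 + semicircle s)
    = (semicircle (s - w1) < semicircle s - w2) by rewrite /w2; apply/idP/idP; lra.
by rewrite semicircle_lt //; split=> h; nra.
Qed.

Lemma visibleSP i x : visible i.+1 x <->
  ytop < upper i.+1 x /\ forall j, (1 <= j <= i)%N -> upper j x < upper i.+1 x.
Proof. by rewrite /visible /= lt_max ltxx /= envelope_lt. Qed.

Lemma visible_interval i : (1 <= i <= N)%N -> is_interval (visible i).
Proof.
case: i => [//|i] iN; apply/is_intervalPlt => x1 x3 /visibleSP[y1 h1] /visibleSP[y3 h3].
move=> x2 /andP[x12 x23].
set c := u i.+1; have yc : 0 <= ytop - c.2 by rewrite subr_ge0 center_le_ytop.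
have ys y : ytop < upper i.+1 y -> ytop - c.2 < semicircle (y - c.1).
  by rewrite /upper ltrBlDl.
have y2 : ytop < upper i.+1 x2.
  rewrite /upper -ltrBlDl; apply: (lt_semicircle_between yc _ (ys _ y1) (ys _ y3)).
  by rewrite !lerD2r !ltW.
apply/visibleSP; split=> // j ji; have jN : (1 <= j <= N)%N by lia.
move: (h1 j ji) (h3 j ji).
rewrite (upper_lt_coverage iN jN y1) (upper_lt_coverage iN jN y3) (upper_lt_coverage iN jN y2).
move=> c1 c3; apply: (coverage_lt0_between yc _ _ _ (ys _ y1) (ys _ y3) c1 c3).
- by have := center_le_ytop jN; lra.
- by have [/andP[? ?] /andP[? ?]] := u_box iN; have [/andP[? ?] /andP[? ?]] := u_box jN; nra.
- by rewrite !ltrD2r x12 x23.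
Qed.

Lemma upper_continuous j : continuous (upper j).
Proof.
move=> x; apply: cvgD; first exact: cvg_cst.
apply: (@continuous_comp _ _ _ (fun x => x - (u j).1)); last exact: semicircle_continuous.
by apply: cvgB; [exact: cvg_id | exact: cvg_cst].
Qed.

Lemma envelope_continuous k : continuous (envelope k).
Proof.
elim: k => [|k IH]; first by move=> x; exact: cvg_cst.
exact: (max_fun_continuous IH (@upper_continuous k.+1)).
Qed.

Lemma band_connected i : (1 <= i <= N)%N -> connected (band i).
Proof.
move=> iN.
pose G := (fun x => (x, envelope i x)) @` visible i.
pose V x := pair x @` [set y | envelope i.-1 x < y <= envelope i x].
have GC : connected G.
  apply: connected_continuous_connected; first exact/connected_intervalP/visible_interval.
  exact/continuous_subspaceT/continuous_graph/envelope_continuous.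
have VC x : connected (V x).
  apply: connected_continuous_connected; last exact/continuous_subspaceT/pair_continuous.
  apply/connected_intervalP => y1 y2 /andP[a1 b1] /andP[a2 b2] z /andP[z1 z2].
  by apply/andP; split; [exact: lt_le_trans z1 | exact: le_trans b2].
have -> : band i = \bigcup_(x in visible i) (G `|` V x).
  apply/seteqP; split=> [[x y] /andP[h1 h2] | p [x Xx [[x' Xx' <-] | [y /andP[h1 h2] <-]]]].
  - by exists x; [exact: lt_le_trans h2 | right; exists y => //; apply/andP].
  - by rewrite /band /= Xx' lexx.
  - by rewrite /band /= h1 h2.
have [[x0 Xx0]|nX] := pselect (visible i !=set0).
  apply: bigcup_connected => [|x Xx]; first by exists (x0, envelope i x0) => x _; left; exists x0.
  apply: connectedU => //.
  by exists (x, envelope i x); split; [exists x | exists (envelope i x) => //; rewrite /= Xx lexx].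
rewrite (_ : visible i = set0) ?bigcup_set0; first exact: connected0.
by apply/seteqP; split=> // x Xx; apply: nX; exists x.
Qed.

Lemma labeled_face_band i C : (1 <= i <= N)%N -> labeled_face b u i C -> C = band i.
Proof.
move=> iN [x []]; rewrite labeled_regionE // => Sx ->.
exact: connected_component_id (band_connected iN).
Qed.

(** * Counting faces, vertices and edges *)

Definition layer k : set (R * R) :=
  if k == 0%N then [set p | p.2 <= ytop]
  else if k == N.+1 then [set p | envelope N p.1 < p.2] else band k.

Lemma band_region k : (1 <= k <= N)%N -> band k !=set0 -> regions b u N (band k).
Proof.
move=> kN [p Sp]; left; right; exists k; split=> //; exists p.
by rewrite labeled_regionE // connected_component_id //; exact: band_connected.
Qed.

Lemma regions_layer A : regions b u N A -> exists2 k, (k <= N.+1)%N & A = layer k.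
Proof.
case=> [[->|[i [iN /(labeled_face_band iN) ->]]]|->].
- exists N.+1 => //; rewrite /layer /= eqxx.
  by apply/seteqP; split=> p /outer_faceE; apply.
- by exists i; [lia | rewrite /layer ifN ?ifN //; lia].
- exists 0%N => //; rewrite /layer /=.
  by apply/seteqP; split=> p /=; rewrite /halfH leNgt => /negP.
Qed.

Let fst_envelope_continuous k : continuous (fun p : R * R => envelope k p.1).
Proof.
move=> p; apply: (@continuous_comp _ _ _ fst); last exact: envelope_continuous.
exact: cvg_fst.
Qed.

Let snd_continuous : continuous (fun p : R * R => p.2).
Proof. by move=> p; exact: cvg_snd. Qed.

Lemma closure_layer_le k : (k <= N)%N ->
  closure (layer k) `<=` [set p | p.2 <= envelope k p.1].
Proof.
move=> kN; apply: closure_ler_fun => // p; rewrite /layer.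
by case: ifP => [/eqP -> //|_]; rewrite ifN; [case/andP | lia].
Qed.

Lemma closure_layer_ge k : (1 <= k <= N.+1)%N ->
  closure (layer k) `<=` [set p | envelope k.-1 p.1 <= p.2].
Proof.
move=> kN; apply: closure_ler_fun => // p; rewrite /layer ifN; last by lia.
by case: ifP => [/eqP -> /ltW // | _ /andP[/ltW]].
Qed.

Lemma bd_layer k p : (k <= N.+1)%N -> bd (layer k) p ->
  exists2 k', (k' <= N)%N & p.2 = envelope k' p.1.
Proof.
move=> kN; have [-> bdp|k0] := eqVneq k 0%N.
  have O0 : [set q : R * R | q.2 < ytop] `<=` layer 0 by move=> q /ltW.
  have oO : open [set q : R * R | q.2 < ytop].
    exact: open_ltr_fun snd_continuous (@cst_continuous _ _ ytop).
  have [cl /negP] := bd_sub_closureD oO O0 bdp.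
  rewrite -leNgt => le; exists 0%N => //; apply/eqP.
  by rewrite eq_le le (closure_layer_le (leq0n N) cl).
have [-> bdp|kN1 bdp] := eqVneq k N.+1.
  have oN : open (layer N.+1) by rewrite /layer eqxx; exact: open_ltr_fun.
  have [cl] := bd_sub_closureD oN (@subset_refl _ _) bdp.
  rewrite /layer eqxx /= => /negP; rewrite -leNgt => le; exists N => //; apply/eqP.
  by rewrite eq_le le (closure_layer_ge (k := N.+1) _ cl) // leqnn.
pose O := [set q : R * R | envelope k.-1 q.1 < q.2] `&` [set q | q.2 < envelope k q.1].
have oO : open O by apply: openI; apply: open_ltr_fun.
have Ok : O `<=` layer k.
  by move=> q [h1 h2]; rewrite /layer (negPf k0) (negPf kN1) /band /= h1 ltW.
have [cl nO] := bd_sub_closureD oO Ok bdp.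
have lo := closure_layer_ge (k := k) ltac:(lia) cl.
have hi := closure_layer_le (k := k) ltac:(lia) cl.
have [e|ne] := eqVneq p.2 (envelope k p.1); first by exists k => //; lia.
exists k.-1; first lia.
apply/eqP; rewrite eq_le lo andbT leNgt; apply/negP => lt; apply: nO; split=> //=.
by rewrite lt_neqAle ne hi.
Qed.

Definition arc_dom j : set R := if j == 0%N then setT else visible j.

Definition on_arc j (p : R * R) := arc_dom j p.1 /\ p.2 = envelope j p.1.

Lemma arc_dom_interval j : (j <= N)%N -> is_interval (arc_dom j).
Proof.
rewrite /arc_dom; case: ifP => [_ _ | j0 jN]; first by [].
by apply: visible_interval; rewrite lt0n j0.
Qed.

Lemma envelope_on_arc k x : exists2 j, (j <= k)%N & arc_dom j x /\ envelope k x = envelope j x.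
Proof.
elim: k => [|k [j jk [Xj E]]]; first by exists 0%N.
have [lt|ge] := ltP (envelope k x) (envelope k.+1 x).
  by exists k.+1.
exists j; first exact: leqW.
by split=> //; rewrite -E; apply/eqP; rewrite eq_le ge envelope_mono.
Qed.

Lemma arc_dom_inj j j' x :
  arc_dom j x -> arc_dom j' x -> envelope j x = envelope j' x -> j = j'.
Proof.
have below i i' : (i < i')%N -> arc_dom i' x -> envelope i x <> envelope i' x.
  move=> ii'; rewrite /arc_dom ifN; last by lia.
  move=> lt E; move: lt; rewrite /visible /= -E ltNge envelope_mono //; lia.
move=> Xj Xj' E; have [jj|jj|//] := ltngtP j j'.
- by have := below _ _ jj Xj' E.
- by have := below _ _ jj Xj (esym E).
Qed.

Lemma skeleton_on_arc p : skeleton b u N p -> exists2 j, (j <= N)%N & on_arc j p.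
Proof.
move=> [A /regions_layer [k kN ->] /(bd_layer kN) [k' k'N pk']].
have [j jk [Xj E]] := envelope_on_arc k' p.1.
by exists j; [lia | split; rewrite // pk'].
Qed.

Lemma arc_in_skeleton j x : (j <= N)%N -> arc_dom j x -> skeleton b u N (x, envelope j x).
Proof.
move=> jN; rewrite /arc_dom; case: ifP => [/eqP-> _ | j0 Xj].
  exists (~` halfH b); first by right.
  split; first by apply: subset_closure; rewrite /halfH /= ltxx.
  by apply: not_interior_above => t t0; rewrite /halfH /= /ytop; apply; lra.
have j1 : (1 <= j <= N)%N by rewrite lt0n j0.
have Sx : band j (x, envelope j x) by rewrite /band /= lexx andbT.
exists (band j); first by apply: band_region; last by exists (x, envelope j x).
split; first exact: subset_closure.
by apply: not_interior_above => t t0 /andP[_] /=; apply/negP; rewrite -ltNge; lra.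
Qed.

Lemma vertex_visible_end p : vertices b u N p ->
  exists m, [/\ (1 <= m <= N)%N, p.2 = envelope m p.1 &
    lower_end (visible m) p.1 \/ upper_end (visible m) p.1].
Proof.
move=> [A1 [A2 [A3 [[r1 r2 r3] [[n12 n13 n23] [[c1 _] [c2 _] [c3 _]]]]]]].
have [k1 k1N E1] := regions_layer r1; have [k2 k2N E2] := regions_layer r2.
have [k3 k3N E3] := regions_layer r3; subst A1 A2 A3.
have [lo [m [hi [/andP[lm mh] [loN clo] [mN cm] [hiN chi]]]]] :=
  @three_distinct_between (fun k => (k <= N.+1)%N /\ closure (layer k) p) k1 k2 k3
   (conj k1N c1) (conj k2N c2) (conj k3N c3)
   (fun e => n12 (congr1 layer e)) (fun e => n13 (congr1 layer e)) (fun e => n23 (congr1 layer e)).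
have mN' : (1 <= m <= N)%N by lia.
have hlo := closure_layer_le (k := lo) ltac:(lia) clo.
have hhi := closure_layer_ge (k := hi) ltac:(lia) chi.
have hm1 := closure_layer_ge (k := m) ltac:(lia) cm.
have hm2 := closure_layer_le (k := m) ltac:(lia) cm.
have e1 : envelope m.-1 p.1 = p.2.
  by apply/eqP; rewrite eq_le hm1 (le_trans hlo) // envelope_mono //; lia.
have e2 : envelope m p.1 = p.2.
  by apply/eqP; rewrite eq_le hm2 (le_trans _ hhi) // envelope_mono //; lia.
exists m; split=> //; apply: interval_end (visible_interval mN') _ _.
- apply: (continuous_closure (f := fst)) cm; first by move=> q; exact: cvg_fst.
  rewrite /layer ifN ?ifN; try lia.
  by move=> q /andP[h1 h2]; exact: lt_le_trans h2.
- by rewrite /visible /= e1 e2 ltxx.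
Qed.

Lemma vertices_count : atmost (vertices b u N) (N.+1).*2.
Proof.
pose P k (p : R * R) := if (k <= N)%N
  then p.2 = envelope k p.1 /\ lower_end (visible k) p.1
  else p.2 = envelope (k - N.+1) p.1 /\ upper_end (visible (k - N.+1)) p.1.
apply: (@atmost_functional _ (0, 0) _ _ P).
  move=> k [p1 p2] [q1 q2]; rewrite /P /=.
  case: ifP => _ [-> Lp] [-> Lq].
  - by rewrite (lower_end_uniq Lp Lq).
  - by rewrite (upper_end_uniq Lp Lq).
move=> p /vertex_visible_end [m [mN pm [Lp|Up]]].
  by exists m; [lia | rewrite /P ifT //; lia].
exists (N.+1 + m)%N; first lia.
by rewrite /P ifN ?addKn //; lia.
Qed.

Lemma edge_component E z : edges b u N E -> E z ->
  E = connected_component (skeleton b u N `\` vertices b u N) z.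
Proof. by move=> [w [_ ->]] Ez; apply: same_connected_component. Qed.

Lemma edge_sub E : edges b u N E -> E `<=` skeleton b u N `\` vertices b u N.
Proof. by move=> [w [_ ->]]; apply: connected_component_sub. Qed.

Lemma arc_segment_component j x1 x2 : (j <= N)%N -> x1 <= x2 ->
  arc_dom j x1 -> arc_dom j x2 ->
  (forall y, x1 < y -> y < x2 -> ~ vertices b u N (y, envelope j y)) ->
  (skeleton b u N `\` vertices b u N) (x1, envelope j x1) ->
  (skeleton b u N `\` vertices b u N) (x2, envelope j x2) ->
  connected_component (skeleton b u N `\` vertices b u N)
    (x1, envelope j x1) (x2, envelope j x2).
Proof.
move=> jN x12 X1 X2 noV Y1 Y2.
apply: (connected_component_max (B := (fun x => (x, envelope j x)) @` `[x1, x2])).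
- by exists x1 => //; rewrite set_itvcc /= lexx x12.
- move=> q [x]; rewrite set_itvcc /= => /andP[h1 h2] <-.
  have [->|n1] := eqVneq x x1; first exact: Y1.
  have [->|n2] := eqVneq x x2; first exact: Y2.
  split; first by apply: arc_in_skeleton => //; apply: (arc_dom_interval jN X1 X2); rewrite h1.
  by apply: noV; rewrite lt_neqAle ?h1 ?h2 ?andbT // eq_sym.
- apply: connected_continuous_connected; first exact: segment_connected.
  exact/continuous_subspaceT/continuous_graph/envelope_continuous.
- by exists x2 => //; rewrite set_itvcc /= lexx x12.
Qed.

(* An edge is determined by its arc [j] and the last vertex [lo] of that arc to
   its left ([-oo] if there is none). *)
Definition edge_after j (lo : \bar R) (E : set (R * R)) := exists x,
  [/\ arc_dom j x, (lo < x%:E)%E, E (x, envelope j x) &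
      forall y, (lo < y%:E)%E -> y < x -> arc_dom j y ->
        ~ vertices b u N (y, envelope j y)].

Lemma edge_after_uniq j lo E1 E2 : (j <= N)%N -> edges b u N E1 -> edges b u N E2 ->
  edge_after j lo E1 -> edge_after j lo E2 -> E1 = E2.
Proof.
move=> jN.
suff ordered x1 x2 F1 F2 : edges b u N F1 -> edges b u N F2 -> x1 <= x2 ->
    arc_dom j x1 -> arc_dom j x2 -> (lo < x1%:E)%E ->
    F1 (x1, envelope j x1) -> F2 (x2, envelope j x2) ->
    (forall y, (lo < y%:E)%E -> y < x2 -> arc_dom j y -> ~ vertices b u N (y, envelope j y)) ->
    F1 = F2.
  move=> e1 e2 [x1 [X1 l1 E1x V1]] [x2 [X2 l2 E2x V2]].
  have [x12|/ltW x21] := leP x1 x2; first exact: (ordered x1 x2).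
  by symmetry; apply: (ordered x2 x1).
move=> e1 e2 x12 X1 X2 l1 E1x E2x V2.
rewrite (edge_component e1 E1x) (edge_component e2 E2x).
apply: same_connected_component; apply: arc_segment_component => //.
- move=> y x1y yx2; apply: V2 => //.
    by apply: (lt_trans l1); rewrite lte_fin.
  by apply: (arc_dom_interval jN X1 X2); rewrite !ltW.
- exact: edge_sub e1 _ E1x.
- exact: edge_sub e2 _ E2x.
Qed.

Section EdgeCount.
Variables (nv : nat) (vtx : nat -> R * R).
Hypothesis vtx_onto : vertices b u N `<=` vtx @` [set k | (k < nv)%N].

Lemma edge_origin E : edges b u N E -> exists2 j, (j <= N)%N &
  edge_after j -oo E \/
  exists2 m, (m < nv)%N & on_arc j (vtx m) /\ edge_after j (vtx m).1%:E E.
Proof.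
move=> eE; have [z [Yz Ez]] := eE.
have [j jN [Xj zj]] := skeleton_on_arc Yz.1.
have Ex : E (z.1, envelope j z.1).
  by rewrite -zj -surjective_pairing Ez; exact: connected_component_refl.
exists j => //.
pose cut m := on_arc j (vtx m) /\ (vtx m).1 < z.1.
have cut_vertex y : y < z.1 -> arc_dom j y -> vertices b u N (y, envelope j y) ->
    exists2 m, (m < nv)%N & cut m /\ (vtx m).1 = y.
  move=> yz Xy Vy; have [m mn vm] := vtx_onto Vy.
  by exists m => //; rewrite /cut /on_arc vm.
have [[m0 m0n cm0] | nocut] := pselect (exists2 m, (m < nv)%N & cut m).
  have [m [mn [jm mz] mmax]] := bounded_argmax (fun m => (vtx m).1) (ex_intro2 _ _ m0 m0n cm0).
  right; exists m => //; split=> //; exists z.1; split=> //.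
  move=> y; rewrite lte_fin => my yz Xy /(cut_vertex y yz Xy) [m' m'n [cm' vm']].
  by have := mmax m' m'n cm'; rewrite vm' leNgt my.
left; exists z.1; split=> //; first exact: ltNyr.
move=> y _ yz Xy /(cut_vertex y yz Xy) [m' m'n [cm' _]].
by apply: nocut; exists m'.
Qed.

Lemma edges_count : atmost (edges b u N) (N.+1 + nv).
Proof.
pose P k E := edges b u N E /\ if (k <= N)%N then edge_after k -oo E
  else exists2 j, on_arc j (vtx (k - N.+1)) & (j <= N)%N /\ edge_after j (vtx (k - N.+1)).1%:E E.
apply: (@atmost_functional _ set0 _ _ P).
  move=> k E1 E2 [e1 +] [e2 +]; case: ifP => kN; first exact: edge_after_uniq.
  move=> [j [Xj vj] [jN A1]] [j' [Xj' vj'] [_ A2]].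
  have jj : j' = j by apply: (arc_dom_inj Xj' Xj); rewrite -vj -vj'.
  by rewrite jj in A2; exact: edge_after_uniq A1 A2.
move=> E eE; have [j jN [A|[m mn [jm A]]]] := edge_origin eE.
  by exists j; [lia | split; rewrite // ifT].
exists (N.+1 + m)%N; first by rewrite ltn_add2l.
by split; rewrite // ifN ?addKn; [exists j | lia].
Qed.

End EdgeCount.

Lemma faces_count : atmost (faces b u N) N.+1.
Proof.
exists (fun k => if k == 0%N then outer_face b u N else band k).
move=> C [->|[i [iN /(labeled_face_band iN) ->]]]; first by exists 0%N.
by exists i; [rewrite /=; lia | rewrite ifN //; lia].
Qed.

Lemma complexity_linear : complexity_le b u N (6 * N.+1).
Proof.
have [vtx vtx_onto] := vertices_count.
exists N.+1, (N.+1).*2, (N.+1 + (N.+1).*2)%N; split; first lia.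
by split; [exact: faces_count | split; [exists vtx | exact: edges_count vtx_onto]].
Qed.

End Envelope.

Theorem corollary1 (R : realType) :
  (exists K : nat, forall (a b : R) (N : nat) (u : nat -> R * R),
     (forall i, (1 <= i <= N)%N -> box a b (u i)) ->
     complexity_le b u N (K * N.+1)) /\
  (forall (a b : R) (N : nat) (u : nat -> R * R),
     (forall i, (1 <= i <= N)%N -> box a b (u i)) ->
     forall i, (1 <= i <= N)%N ->
     forall C1 C2, labeled_face b u i C1 -> labeled_face b u i C2 -> C1 = C2).
Proof.
split; first by exists 6%N => a b N u u_box; exact: complexity_linear u_box.
move=> a b N u u_box i iN C1 C2 l1 l2.
by rewrite (labeled_face_band u_box iN l1) (labeled_face_band u_box iN l2).
Qed.
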